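(* Let $G$ be a $2K_2$-free graph and let $X$ be a minimal dominating set of $G$ with $|X|>\alpha(G)$. Then there is a triangle $T$ (a set of three pairwise adjacent vertices) with $T\subseteq X$ such that $X=T\cup A(T)$, where $A(T)$ is the set of vertices outside $T$ having no neighbour in $T$.
   Context: All graphs are finite, simple and undirected. $2K_2$-free means no induced subgraph isomorphic to the disjoint union of two edges. $\alpha(G)$ is the maximum size of an independent set of $G$. A dominating set is a vertex set $D$ such that every vertex outside $D$ has a neighbour in $D$; it is minimal if no proper subset is dominating. *)

From mathcomp Require Import all_boot.
Set Implicit Arguments. Unset Strict Implicit. Unset Printing Implicit Defensive.

Section Graph.
Variables (T : finType) (e : rel T).

Definition simple_graph : Prop := symmetric e /\ irreflexive e.

(* G is 2K2-free: no induced subgraph on 4 distinct vertices a,b,c,d whose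
   only edges are ab and cd. *)
Definition twoK2_free : Prop :=
  forall a b c d : T,
    uniq [:: a; b; c; d] -> e a b -> e c d ->
    [|| e a c, e a d, e b c | e b d].

Definition independent (S : {set T}) : bool :=
  [forall x in S, forall y in S, ~~ e x y].

Definition alpha : nat := \max_(S : {set T} | independent S) #|S|.

Definition dominating (D : {set T}) : bool :=
  [forall v, (v \in D) || [exists u in D, e v u]].

Definition minimal_dominating (D : {set T}) : bool :=
  dominating D && [forall D' : {set T}, (D' \proper D) ==> ~~ dominating D'].

Definition triangle (S : {set T}) : bool :=
  (#|S| == 3) && [forall x in S, forall y in S, (x != y) ==> e x y].

Definition anticomplete_set (S : {set T}) : {set T} :=
  [set v | (v \notin S) && [forall u in S, ~~ e v u]].

End Graph.

From mathcomp Require Import all_boot.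
Set Implicit Arguments. Unset Strict Implicit. Unset Printing Implicit Defensive.

(* Let Y be the set of vertices of X having a neighbour in X.  By minimality
   every y in Y has an external private neighbour p y, whose only neighbour in
   X is y.  Hence an edge inside X and an edge p x p y have no edge between
   them unless they share a vertex, and 2K2-freeness forces them to meet.
   Since |X| > alpha, for every independent S there is an edge p x p y with
   x, y outside S.  Playing these edges against the edges of Y shows that Y
   induces a triangle; a vertex outside X with no neighbour in the triangle
   would, via its dominator and an edge p x p y, be adjacent to some p z and so
   yield a 2K2 with an edge of the triangle avoiding z. *)

Section Graph.
Variables (T : finType) (e : rel T).
Hypotheses (esym : symmetric e) (eirr : irreflexive e).

Lemma edge_neq x y : e x y -> x != y.
Proof. by apply: contraTneq => ->; rewrite eirr. Qed.

(* Two edges with no edge between them automatically span four distinct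
   vertices, so no distinctness hypothesis is needed. *)
Lemma twoK2_free_cross a b c d : twoK2_free e ->
  e a b -> e c d -> [|| e a c, e a d, e b c | e b d].
Proof.
move=> h2k eab ecd; apply/negPn/negP; rewrite !negb_or => /and4P[nac nad nbc nbd].
have neq x y z : e y z -> ~~ e x z -> x != y by move=> eyz; apply: contraNneq => ->.
have edc : e d c by rewrite esym.
have uniq_abcd : uniq [:: a; b; c; d].
  by rewrite /= !inE !negb_or (edge_neq eab) (edge_neq ecd) (neq _ _ _ ecd nad)
    (neq _ _ _ edc nac) (neq _ _ _ ecd nbd) (neq _ _ _ edc nbc).
move: (h2k _ _ _ _ uniq_abcd eab ecd).
by rewrite (negbTE nac) (negbTE nad) (negbTE nbc) (negbTE nbd).
Qed.

Lemma independent_le_alpha (S : {set T}) : independent e S -> #|S| <= alpha e.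
Proof. exact: (leq_bigmax_cond (F := fun S : {set T} => #|S|)). Qed.

Lemma alpha_lt_edge (S : {set T}) :
  alpha e < #|S| -> exists x y, [/\ x \in S, y \in S & e x y].
Proof.
case: (boolP (independent e S)) => [/independent_le_alpha|].
  by rewrite leqNgt => /negP.
by case/forall_inPn => x xS /forall_inPn[y yS]; rewrite negbK; exists x, y.
Qed.

Lemma independent0 : independent e set0.
Proof. by apply/forall_inP => x; rewrite inE. Qed.

Lemma independent1 x : independent e [set x].
Proof. by apply/forall_inP => y /set1P-> ; apply/forall_inP => z /set1P->; rewrite eirr. Qed.

Lemma independent2 x y : ~~ e x y -> independent e [set x; y].
Proof.
move=> nxy; apply/forall_inP => u /set2P[]-> ; apply/forall_inP => v /set2P[]->;
  by rewrite ?eirr // esym.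
Qed.

Lemma triangle_of a b c : e a b -> e b c -> e a c -> triangle e [set a; b; c].
Proof.
move=> eab ebc eac; rewrite /triangle -setUA cardsU1 cards2 !inE.
rewrite (negbTE (edge_neq eab)) (negbTE (edge_neq eac)) (negbTE (edge_neq ebc)) /=.
apply/forall_inP => x; rewrite !inE => /or3P[]/eqP-> ;
  apply/forall_inP => y; rewrite !inE => /or3P[]/eqP-> ;
  by rewrite ?eqxx ?eab ?ebc ?eac ?implybT // esym ?eab ?ebc ?eac ?implybT.
Qed.

Lemma triangle_edge_avoiding (Tr : {set T}) z : triangle e Tr ->
  exists y1 y2, [/\ y1 \in Tr, y2 \in Tr, y1 != z, y2 != z & e y1 y2].
Proof.
case/andP => /eqP card3 /forall_inP adj.
have : 1 < #|Tr :\ z|.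
  by rewrite -(ltn_add2l (z \in Tr)) -cardsD1 card3; case: (z \in Tr).
case/card_gt1P => y1 [y2 []]; rewrite !inE => /andP[y1z y1T] /andP[y2z y2T] y12.
by exists y1, y2; split => //; exact: (implyP (forall_inP (adj _ y1T) _ y2T)).
Qed.

Definition nonisolated (X : {set T}) : {set T} := [set y in X | [exists z in X, e y z]].

Definition ext_private_nb (X : {set T}) (y w : T) : Prop :=
  [/\ w \notin X, e y w & forall z, z \in X -> e w z -> z = y].

Lemma nonisolated_sub (X : {set T}) : nonisolated X \subset X.
Proof. by apply/subsetP => y; rewrite inE => /andP[]. Qed.

Lemma mem_nonisolated (X : {set T}) y z : y \in X -> z \in X -> e y z -> y \in nonisolated X.
Proof. by move=> yX zX eyz; rewrite inE yX; apply/exists_inP; exists z. Qed.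

Lemma ext_private_nb_exists (X : {set T}) y : minimal_dominating e X ->
  y \in nonisolated X -> exists w, ext_private_nb X y w.
Proof.
case/andP=> domX /forall_inP minX; rewrite inE => /andP[yX /exists_inP[z zX eyz]].
have /minX : X :\ y \proper X by rewrite properD1.
case/forallPn => v; rewrite negb_or => /andP[vXy /exists_inPn nbv].
have nbX u : u \in X -> e v u -> u = y.
  move=> uX evu; apply/eqP; apply: contraT => uy.
  have /nbv : u \in X :\ y by rewrite !inE uy.
  by rewrite evu.
have vX : v \notin X.
  apply: contra vXy => vX; rewrite !inE vX andbT; apply/eqP => vy.
  have /nbv : z \in X :\ y by rewrite !inE zX eq_sym edge_neq.
  by rewrite vy eyz.
move/forallP: domX => /(_ v); rewrite (negbTE vX) => /exists_inP[u uX evu].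
by exists v; split => //; rewrite esym -(nbX u uX evu).
Qed.

Lemma ext_private_nb_choice (X : {set T}) : minimal_dominating e X ->
  exists p : T -> T, {in nonisolated X, forall y, ext_private_nb X y (p y)}.
Proof.
move=> minX; have exw y : exists w, y \in nonisolated X -> ext_private_nb X y w.
  case: (boolP (y \in nonisolated X)) => [yY|_]; last by exists y.
  by have [w hw] := ext_private_nb_exists minX yY; exists w.
by have [p hp] := fin_all_exists exw; exists p.
Qed.

Lemma nonisolated_cover (X Tr : {set T}) :
  Tr \subset X -> nonisolated X \subset Tr -> X \subset Tr :|: anticomplete_set e Tr.
Proof.
move=> TrX YTr; apply/subsetP => v vX; rewrite !inE; case: (boolP (v \in Tr)) => //= vTr.
apply/forall_inP => u uT; apply: contra vTr => evu.
by apply: (subsetP YTr); apply: (mem_nonisolated vX (subsetP TrX u uT)).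
Qed.

End Graph.

Section PrivateNeighbours.
Variables (T : finType) (e : rel T).
Hypotheses (esym : symmetric e) (eirr : irreflexive e) (h2k : twoK2_free e).
Variables (X : {set T}) (p : T -> T).
Hypothesis p_private : {in nonisolated e X, forall y, ext_private_nb e X y (p y)}.

Local Notation Y := (nonisolated e X).

Lemma nonisolatedX y : y \in Y -> y \in X.
Proof. exact: (subsetP (nonisolated_sub e X)). Qed.

Lemma p_notin y : y \in Y -> p y \notin X.
Proof. by case/p_private. Qed.

Lemma edge_p y : y \in Y -> e y (p y).
Proof. by case/p_private. Qed.

Lemma nonadj_p y z : y \in Y -> z \in X -> z != y -> e z (p y) = false.
Proof.
move=> /p_private[_ _ py_uniq] zX zy; apply: contraNF zy => ezp.
by apply/eqP; apply: py_uniq; rewrite // esym.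
Qed.

Lemma p_inj : {in Y &, injective p}.
Proof.
move=> x y xY yY pxy; have [_ _ py_uniq] := p_private yY.
by apply: py_uniq; [exact: nonisolatedX | rewrite -pxy esym edge_p].
Qed.

Lemma edge_or_p_edge a b : a \in Y -> b \in Y -> a != b -> e a b || e (p a) (p b).
Proof.
move=> aY bY ab; have := twoK2_free_cross esym eirr h2k (edge_p aY) (edge_p bY).
rewrite (nonadj_p bY (nonisolatedX aY) ab) (esym (p a)).
by rewrite (nonadj_p aY (nonisolatedX bY)) // eq_sym.
Qed.

Lemma edge_p_edge_meet a b x y : a \in X -> b \in X -> x \in Y -> y \in Y ->
  e a b -> e (p x) (p y) -> a != x -> a != y -> b != x -> b != y -> False.
Proof.
move=> aX bX xY yY eab exy ax ay bx b_y.
have := twoK2_free_cross esym eirr h2k eab exy.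
by rewrite !nonadj_p.
Qed.

Lemma p_edge_dominates a b m : a \in Y -> b \in Y -> m \in Y ->
  e (p a) (p b) -> m != a -> m != b -> e (p m) (p a) || e (p m) (p b).
Proof.
move=> aY bY mY eab ma mb; have := twoK2_free_cross esym eirr h2k (edge_p mY) eab.
by rewrite (nonadj_p aY _ ma) ?(nonadj_p bY _ mb) ?nonisolatedX.
Qed.

Lemma edge_dominates a b m : a \in X -> b \in X -> m \in Y ->
  e a b -> m != a -> m != b -> e m a || e m b.
Proof.
move=> aX bX mY eab ma mb; have := twoK2_free_cross esym eirr h2k eab (edge_p mY).
by rewrite !nonadj_p 1?eq_sym // ![e _ m]esym orbF.
Qed.

Section LargeDominating.
Hypothesis alpha_lt : alpha e < #|X|.

(* Swapping every vertex of [Y] outside [S] for its private neighbour is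
   injective on [X], so the image still has more than [alpha e] vertices;
   an edge inside it can only join two of the new private neighbours. *)
Lemma p_edge_avoiding (S : {set T}) : independent e S ->
  exists x y, [/\ x \in Y, y \in Y, x \notin S, y \notin S & e (p x) (p y)].
Proof.
move=> indS; pose f x := if (x \in Y) && (x \notin S) then p x else x.
have f_inj : {in X &, injective f}.
  move=> x y xX yX; rewrite /f.
  case: ifP => [/andP[xY _]|_]; case: ifP => [/andP[yY _]|_] //.
  - exact: p_inj.
  - by move=> pxy; move: (p_notin xY); rewrite pxy yX.
  - by move=> pxy; move: (p_notin yY); rewrite -pxy xX.
have : alpha e < #|f @: X| by rewrite card_in_imset.
case/alpha_lt_edge => _ [_ [/imsetP[x xX ->] /imsetP[y yX ->]]]; rewrite /f.
case: ifP => [/andP[xY xS]|hx]; case: ifP => [/andP[yY yS]|hy] exy.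
- by exists x, y.
- case: (eqVneq y x) => [yx|yx]; first by rewrite yx xY xS in hy.
  by rewrite esym nonadj_p in exy.
- case: (eqVneq x y) => [xy|xy]; first by rewrite xy yY yS in hx.
  by rewrite nonadj_p in exy.
- have xY := mem_nonisolated xX yX exy.
  have yY : y \in Y by apply: mem_nonisolated yX xX _; rewrite esym.
  move: hx hy; rewrite xY yY /= => /negbFE xS /negbFE yS.
  by move/forall_inP: indS => /(_ x xS)/forall_inP/(_ y yS); rewrite exy.
Qed.

Lemma p_edge_at (S : {set T}) u v : independent e S -> u \in S ->
  u \in X -> v \in X -> e u v -> exists m, [/\ m \in Y, m \notin S & e (p v) (p m)].
Proof.
move=> indS uS uX vX euv.
have [x [y [xY yY xS yS exy]]] := p_edge_avoiding indS.
have ux : u != x by apply: contraNneq xS => <-.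
have uy : u != y by apply: contraNneq yS => <-.
case: (eqVneq v x) => [->|vx]; first by exists y.
case: (eqVneq v y) => [->|vy]; first by exists x; rewrite esym.
by case: (edge_p_edge_meet uX vX xY yY euv exy ux uy vx vy).
Qed.

(* Otherwise p u p w is an edge, and a private-neighbour edge p v p m with m
   outside {u, v, w} yields one disjoint from uv or from vw. *)
Lemma nonisolated_edge_trans u v w : u \in Y -> v \in Y -> w \in Y ->
  e u v -> e v w -> u != w -> e u w.
Proof.
move=> uY vY wY euv evw uw; apply/negPn/negP => nuw.
have [uX vX wX] := And3 (nonisolatedX uY) (nonisolatedX vY) (nonisolatedX wY).
have epuw : e (p u) (p w) by move: (edge_or_p_edge uY wY uw); rewrite (negbTE nuw).
have [m [mY]] := p_edge_at (independent2 esym eirr nuw) (set21 u w) uX vX euv.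
rewrite !inE negb_or => /andP[mu mw] epvm.
have mv : m != v by apply: contraTneq epvm => ->; rewrite eirr.
have uv := edge_neq eirr euv; have vw := edge_neq eirr evw.
case/orP: (p_edge_dominates uY wY mY epuw mu mw) => epm.
- by apply: (edge_p_edge_meet vX wX mY uY evw epm); rewrite // eq_sym.
- by apply: (edge_p_edge_meet uX vX mY wY euv epm); rewrite // eq_sym.
Qed.

Lemma exists_nonisolated_triangle : exists Tr, triangle e Tr /\ Tr \subset Y.
Proof.
have [u [v [uX vX euv]]] := alpha_lt_edge alpha_lt.
have uY := mem_nonisolated uX vX euv.
have vY : v \in Y by apply: mem_nonisolated vX uX _; rewrite esym.
have [w [wY]] := p_edge_at (independent1 eirr u) (set11 u) uX vX euv.
rewrite inE => wu epvw.
have wv : w != v by apply: contraTneq epvw => ->; rewrite eirr.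
have [ewu ewv] : e w u /\ e w v.
  case/orP: (edge_dominates uX vX wY euv wu wv) => [ewu|ewv]; split => //.
    exact: nonisolated_edge_trans wY uY vY ewu euv wv.
  by apply: nonisolated_edge_trans wY vY uY ewv _ wu; rewrite esym.
exists [set u; v; w]; split; first by apply: triangle_of; rewrite // esym.
by apply/subsetP => x; rewrite !in_setU !in_set1 -orbA => /or3P[]/eqP->.
Qed.

Lemma nonisolated_sub_triangle Tr : triangle e Tr -> Tr \subset X -> Y \subset Tr.
Proof.
move=> tri /subsetP TrX; apply/subsetP => d dY; apply/negPn/negP => dTr.
have := dY; rewrite inE => /andP[dX /exists_inP[d' d'X edd']].
have ed'd : e d' d by rewrite esym.
have [m [mY _ epdm]] := p_edge_at (independent1 eirr d') (set11 d') d'X dX ed'd.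
have [y1 [y2 [y1T y2T y1m y2m ey12]]] := triangle_edge_avoiding m tri.
have y1d : y1 != d by apply: contraNneq dTr => <-.
have y2d : y2 != d by apply: contraNneq dTr => <-.
by apply: (edge_p_edge_meet (TrX y1 y1T) (TrX y2 y2T) dY mY ey12 epdm).
Qed.

Lemma anticomplete_triangle_sub Tr : dominating e X -> triangle e Tr ->
  Tr \subset X -> Y \subset Tr -> anticomplete_set e Tr \subset X.
Proof.
move=> domX tri /subsetP TrX /subsetP YTr.
apply/subsetP => v; rewrite inE => /andP[_ /forall_inP vA]; apply: contraT => vX.
have [u uX evu] : exists2 u, u \in X & e v u.
  by move/forallP: domX => /(_ v); rewrite (negbTE vX) => /exists_inP.
have uY : u \notin Y by apply/negP => /YTr/vA; rewrite evu.
have [x [y [xY yY _ _ epxy]]] := p_edge_avoiding (S := set0) (independent0 _).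
have [z zY evz] : exists2 z, z \in Y & e v (p z).
  have ux : u != x by apply: contraNneq uY => ->.
  have uy : u != y by apply: contraNneq uY => ->.
  have := twoK2_free_cross esym eirr h2k evu epxy.
  rewrite (nonadj_p xY uX ux) (nonadj_p yY uX uy) !orbF.
  by case/orP => ?; [exists x | exists y].
have [y1 [y2 [y1T y2T y1z y2z ey12]]] := triangle_edge_avoiding z tri.
have := twoK2_free_cross esym eirr h2k evz ey12.
rewrite (negbTE (vA _ y1T)) (negbTE (vA _ y2T)) ![e (p z) _]esym.
by rewrite !nonadj_p ?TrX.
Qed.

End LargeDominating.

End PrivateNeighbours.

Theorem corollary5p3 (T : finType) (e : rel T) (X : {set T}) :
  simple_graph e -> twoK2_free e ->
  minimal_dominating e X -> alpha e < #|X| ->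
  exists Tr : {set T},
    [/\ triangle e Tr, Tr \subset X & X = Tr :|: anticomplete_set e Tr].
Proof.
move=> [esym eirr] h2k minX alpha_lt.
have [p p_private] := ext_private_nb_choice esym eirr minX.
have [Tr [tri TrY]] := exists_nonisolated_triangle esym eirr h2k p_private alpha_lt.
have TrX : Tr \subset X := subset_trans TrY (nonisolated_sub e X).
have YTr := nonisolated_sub_triangle esym eirr h2k p_private alpha_lt tri TrX.
have domX : dominating e X by case/andP: minX.
exists Tr; split => //; apply/eqP; rewrite eqEsubset nonisolated_cover //=.
by rewrite subUset TrX (anticomplete_triangle_sub esym eirr h2k p_private alpha_lt).
Qed.
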